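(* Let $\tau$ be an abstract path and let $x$ be a marker of $\tau$ at which one of the gluing moves Ia, Ib, II applies. Then the glued abstract path $\tilde q(\tau,x)$ satisfies $w(\tilde q(\tau,x))=w(\tau)-1$.
   Context: $\mathbb F=\{0,1\}$, $\mathbb N=\{0,1,2,\dots\}$. Abstract vertex types: $o$ (interior), $u$ (unstable), $s$ (stable); $u,s$ are boundary. An abstract edge is $\varepsilon=(\mu,(o_1,u_1,s_1),(o_2,u_2,s_2))\in\mathbb F\times\mathbb N^3\times\mathbb N^3$ such that if $\mu=0$ then $s_1=u_2=0$, and if $\mu=1$ then $o_1=o_2=0$ (interior if $\mu=0$, boundary if $\mu=1$; it has $X_1$ incoming and $X_2$ outgoing ends of type $X$). Its weight is $w(\varepsilon)=1$ if $\mu=0$ and $2-s_1-u_2$ if $\mu=1$. An abstract path $\tau=(T,\tau,\sigma)$: a non-empty finite directed tree $T=(V,E)$ (nodes; arrows, also called breaks; arrow $e$ from $s(e)$ to $t(e)$), $\tau:V\to$ abstract edges, $\sigma:E\to\{o,u,s\}$, such that for each node $v$ and type $X$, $X_1(v)\ge|\{e:t(e)=v,\sigma(e)=X\}|$ and $X_2(v)\ge|\{e:s(e)=v,\sigma(e)=X\}|$, where $X_i(v)$ are the entries of $\tau(v)$. Ends of $\tau$: $X_1(\tau)=\sum_vX_1(v)-|\sigma^{-1}(X)|$, $X_2(\tau)=\sum_vX_2(v)-|\sigma^{-1}(X)|$. Nodes are interior/boundary by $\mu(v)$. $\tau$ is legal if $s_1(\tau)=u_2(\tau)=0$. The restriction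 to a non-empty subtree is a subpath. Weight $w(\tau)=\sum_vw(\tau(v))$. $\mathrm{Star}^o(v)$ is the subtree induced by $v$ and its adjacent interior nodes. Gluing: contract a subtree $T'$ to a node $v^*$ (arrows between $T'$ and the rest reattached to $v^*$ with the same types; other data unchanged) and set $\tau(v^* )=(\mu^*,(o_1(\tau'),u_1(\tau'),s_1(\tau')),(o_2(\tau'),u_2(\tau'),s_2(\tau')))$ where $\tau'$ is the subpath on $T'$. Moves: (Ia) at an arrow both of whose endpoints are interior: contract that arrow, $\mu^*=0$; (Ib) at a boundary node $v$ whose subpath on $\mathrm{Star}^o(v)$ is legal: contract $\mathrm{Star}^o(v)$, $\mu^*=0$; (II) at an arrow both of whose endpoints are boundary: contract it, $\mu^*=1$. A marker is a node or an arrow; at most one move applies at a given marker, and the result is denoted $\tilde q(\tau,x)$. *)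

From HB Require Import structures.
From mathcomp Require Import all_boot all_order all_algebra.
Set Implicit Arguments. Unset Strict Implicit. Unset Printing Implicit Defensive.
Import GRing.Theory Num.Theory.

(* Abstract vertex types: o (interior), u (unstable), s (stable). *)
Inductive vtype := To | Tu | Ts.

Definition vtype_eqb (a b : vtype) : bool :=
  match a, b with To, To | Tu, Tu | Ts, Ts => true | _, _ => false end.
Lemma vtype_eqP : Equality.axiom vtype_eqb.
Proof. by case; case; constructor. Qed.
HB.instance Definition _ := hasDecEq.Build vtype vtype_eqP.

(* An abstract edge (mu, (o1,u1,s1), (o2,u2,s2)); mu = true means mu = 1
   (boundary), mu = false means mu = 0 (interior). *)
Record aedge := AEdge {
  mu : bool;
  o1 : nat; u1 : nat; s1 : nat;
  o2 : nat; u2 : nat; s2 : nat }.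

Definition valid_aedge (a : aedge) : bool :=
  if mu a then (o1 a == 0%N) && (o2 a == 0%N)
  else (s1 a == 0%N) && (u2 a == 0%N).

Definition ends1 (a : aedge) (X : vtype) : nat :=
  match X with To => o1 a | Tu => u1 a | Ts => s1 a end.
Definition ends2 (a : aedge) (X : vtype) : nat :=
  match X with To => o2 a | Tu => u2 a | Ts => s2 a end.

Definition wedge (a : aedge) : int :=
  if mu a then (Posz 2 - Posz (s1 a) - Posz (u2 a))%R else Posz 1.

(* Raw data of an abstract path: nodes, arrows (breaks) e from asrc e to
   atgt e, node labels tau, arrow types sigma. *)
Record apath := APath {
  node : finType;
  arrow : finType;
  asrc : arrow -> node;
  atgt : arrow -> node;
  alab : node -> aedge;
  asig : arrow -> vtype }.

Definition adj (p : apath) : rel (node p) :=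
  fun u v => [exists e : arrow p,
    ((asrc e == u) && (atgt e == v)) || ((asrc e == v) && (atgt e == u))].

(* (T, tau, sigma) is an abstract path: T a non-empty finite directed tree,
   tau valued in abstract edges, and the end-count constraints. *)
Definition is_apath (p : apath) : Prop :=
  [/\ (0 < #|node p|)%N,
      (#|arrow p|.+1 = #|node p|)%N,
      (forall u v : node p, connect (@adj p) u v),
      (forall v : node p, valid_aedge (alab v)) &
      (forall (v : node p) (X : vtype),
         (#|[set e : arrow p | (atgt e == v) && (asig e == X)]| <= ends1 (alab v) X)%N
         /\ (#|[set e : arrow p | (asrc e == v) && (asig e == X)]| <= ends2 (alab v) X)%N)].

Definition wpath (p : apath) : int := (\sum_(v : node p) wedge (alab v))%R.

Definition inner_arrows (p : apath) (S : {set node p}) (X : vtype) : nat :=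
  #|[set e : arrow p | (asrc e \in S) && (atgt e \in S) && (asig e == X)]|.

Definition sub_ends1 (p : apath) (S : {set node p}) (X : vtype) : nat :=
  ((\sum_(v in S) ends1 (alab v) X) - inner_arrows S X)%N.
Definition sub_ends2 (p : apath) (S : {set node p}) (X : vtype) : nat :=
  ((\sum_(v in S) ends2 (alab v) X) - inner_arrows S X)%N.

Definition sub_legal (p : apath) (S : {set node p}) : bool :=
  (sub_ends1 S Ts == 0%N) && (sub_ends2 S Tu == 0%N).

(* Gluing: contract the subtree S to a single new node v* (represented by
   None) with label (mu*, ends of the subpath on S); other data unchanged. *)
Definition glue (p : apath) (S : {set node p}) (mustar : bool) : apath :=
  let N := option {v : node p | v \notin S} in
  let A := {e : arrow p | ~~ ((asrc e \in S) && (atgt e \in S))} in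
  @APath N A
    (fun e => insub (asrc (val e)))
    (fun e => insub (atgt (val e)))
    (fun n => match n with
              | None => AEdge mustar
                          (sub_ends1 S To) (sub_ends1 S Tu) (sub_ends1 S Ts)
                          (sub_ends2 S To) (sub_ends2 S Tu) (sub_ends2 S Ts)
              | Some v => alab (val v)
              end)
    (fun e => asig (val e)).

Definition interior (p : apath) (v : node p) : bool := ~~ mu (alab v).
Definition boundary (p : apath) (v : node p) : bool := mu (alab v).

Definition star_o (p : apath) (v : node p) : {set node p} :=
  [set w | (w == v) || (interior w && @adj p v w)].

Definition marker (p : apath) : Type := (node p + arrow p)%type.

Definition move_Ia (p : apath) (e : arrow p) : bool :=
  interior (asrc e) && interior (atgt e).
Definition move_Ib (p : apath) (v : node p) : bool :=
  boundary v && sub_legal (star_o v).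
Definition move_II (p : apath) (e : arrow p) : bool :=
  boundary (asrc e) && boundary (atgt e).

Definition move_applies (p : apath) (x : marker p) : bool :=
  match x with
  | inl v => move_Ib v
  | inr e => move_Ia e || move_II e
  end.

(* q~(tau, x); only meaningful when some move applies at x *)
Definition qtilde (p : apath) (x : marker p) : apath :=
  match x with
  | inl v => glue (star_o v) false
  | inr e => if move_Ia e then glue [set asrc e; atgt e] false
             else glue [set asrc e; atgt e] true
  end.

From mathcomp Require Import all_boot all_order all_algebra.
From mathcomp Require Import zify.
Import GRing.Theory.
Set Implicit Arguments. Unset Strict Implicit. Unset Printing Implicit Defensive.

(* Gluing a set S of nodes into one node changes the weight by the weight of
   the new node minus the total weight of S, so it suffices to show that the
   new node weighs one less than S.  The combinatorial input is that, in a
   tree, any non-empty set of nodes spans fewer arrows than it has nodes.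
   For move Ia this is 1 = 1 + 1 - 1.  For move II the arrow e is the only
   one between its ends, and it has type s or u because boundary nodes have
   no o-ends, so gluing removes exactly one s_1 or u_2 end.  For move Ib at v,
   interior nodes have no s_1 or u_2 ends, so legality forces each s_1 and
   u_2 end of v to be matched by an arrow of the star; every interior
   neighbour is joined to v by such an arrow, and the star spans fewer arrows
   than nodes, whence s_1(v) + u_2(v) = |Star^o(v)| - 1. *)

Definition arrows_within (p : apath) (S : {set node p}) : {set arrow p} :=
  [set e | (asrc e \in S) && (atgt e \in S)].

Lemma in_arrows_within (p : apath) (S : {set node p}) e :
  (e \in arrows_within S) = (asrc e \in S) && (atgt e \in S).
Proof. by rewrite inE. Qed.

Lemma arrows_withinS (p : apath) (S S' : {set node p}) :
  S \subset S' -> arrows_within S \subset arrows_within S'.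
Proof.
move=> /subsetP sSS'; apply/subsetP => e; rewrite !in_arrows_within.
by case/andP => /sSS' -> /sSS'.
Qed.

Lemma inner_arrowsE (p : apath) (S : {set node p}) X :
  inner_arrows S X = #|[set e in arrows_within S | asig e == X]|.
Proof. by apply: eq_card => e; rewrite !inE. Qed.

Lemma inner_arrows_add_le (p : apath) (S : {set node p}) (X Y : vtype) :
  X != Y -> inner_arrows S X + inner_arrows S Y <= #|arrows_within S|.
Proof.
move=> neXY; rewrite !inner_arrowsE.
set A := [set e in _ | _ == X]; set B := [set e in _ | _ == Y].
have AB0 : A :&: B = set0.
  apply/setP => e; rewrite !inE.
  by case: (asig e =P X) => [-> | _]; rewrite ?(negbTE neXY) !andbF.
rewrite -[_ + _]subn0 -(cards0 (arrow p)) -AB0 -cardsU.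
by apply: subset_leq_card; apply/subsetP => e; rewrite !inE => /orP[] /andP[-> _].
Qed.

Section ConnectedGraph.

Variable p : apath.
Hypothesis p_connected : forall u v : node p, connect (@adj p) u v.
Hypothesis p_card_arrow : #|arrow p|.+1 = #|node p|.

Lemma exists_arrow_leaving (S : {set node p}) u w : u \in S -> w \notin S ->
  exists2 e, e \notin arrows_within S & (asrc e \in S) || (atgt e \in S).
Proof.
move=> uS wS; apply/exists_inP; apply: contraLR wS => /exists_inPn noe.
rewrite negbK -(closed_connect _ (p_connected u w)) // => x y /existsP[e xy].
have := noe e; rewrite unfold_in in_arrows_within negb_and negb_or.
by case/orP: xy => /andP[/eqP <- /eqP <-];
  case: (asrc e \in S); case: (atgt e \in S) => //= /(_ isT).
Qed.

(* Adding to S the far end of an arrow leaving S makes that arrow internal, so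
   every node outside S accounts for at least one arrow not within S. *)
Lemma card_setC_le_arrows_not_within (S : {set node p}) :
  S != set0 -> #|~: S| <= #|~: arrows_within S|.
Proof.
move Hn: #|~: S| => n; elim: n S Hn => // n IH S Hn /set0Pn[u uS].
have /set0Pn[w] : ~: S != set0 by rewrite -card_gt0 Hn.
rewrite inE => wS; have [e eS e_touch] := exists_arrow_leaving uS wS.
have [y yS e_y] : exists2 y, y \notin S & e \in arrows_within (y |: S).
  move: eS e_touch; rewrite in_arrows_within.
  case: (boolP (asrc e \in S)) => [srcS | srcNS] /=.
  - by move=> tgtNS _; exists (atgt e) => //; rewrite in_arrows_within !inE srcS eqxx !orbT.
  - by move=> _ tgtS; exists (asrc e) => //; rewrite in_arrows_within !inE tgtS eqxx !orbT.
have lt_within : arrows_within S \proper arrows_within (y |: S).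
  by apply/properP; split; [exact/arrows_withinS/subsetUr | exists e].
have card_yS : #|~: (y |: S)| = n.
  by move: Hn (cardsC S) (cardsC (y |: S)); rewrite cardsU1 yS; lia.
have IHy : n <= #|~: arrows_within (y |: S)|.
  by apply: IH card_yS _; apply/set0Pn; exists y; rewrite setU11.
by rewrite -properC in lt_within; have := proper_card lt_within; lia.
Qed.

Lemma card_arrows_within_lt (S : {set node p}) :
  S != set0 -> #|arrows_within S| < #|S|.
Proof.
move=> S0; have := card_setC_le_arrows_not_within S0.
have := cardsC S; have := cardsC (arrows_within S).
have : 0 < #|S| by rewrite card_gt0.
lia.
Qed.

End ConnectedGraph.

Lemma valid_aedge_interior (a : aedge) :
  valid_aedge a -> ~~ mu a -> s1 a = 0 /\ u2 a = 0.
Proof. by rewrite /valid_aedge => + /negbTE mu0; rewrite mu0 => /andP[/eqP-> /eqP->]. Qed.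

Lemma valid_aedge_boundary (a : aedge) :
  valid_aedge a -> mu a -> o1 a = 0 /\ o2 a = 0.
Proof. by rewrite /valid_aedge => + mu1; rewrite mu1 => /andP[/eqP-> /eqP->]. Qed.

Definition glued_edge (p : apath) (S : {set node p}) (m : bool) : aedge :=
  AEdge m (sub_ends1 S To) (sub_ends1 S Tu) (sub_ends1 S Ts)
          (sub_ends2 S To) (sub_ends2 S Tu) (sub_ends2 S Ts).

Lemma wpath_glue_sub1 (p : apath) (S : {set node p}) (m : bool) :
  wedge (glued_edge S m) = (\sum_(v in S) wedge (alab v) - 1)%R ->
  wpath (glue S m) = (wpath p - 1)%R.
Proof.
move=> glued_weight; rewrite /wpath (bigD1 None) //= glued_weight.
rewrite [in RHS](bigID (mem S)) /= [RHS]addrAC; congr (_ + _)%R.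
rewrite (reindex_omap Some id) /=; last by case.
rewrite [RHS](eq_bigl (fun v => v \in [pred v | v \notin S])) // [RHS]big_sub /=.
by apply: eq_bigl => x; rewrite eqxx.
Qed.

Section AbstractPath.

Variable p : apath.
Hypothesis p_apath : is_apath p.

Lemma apath_valid (v : node p) : valid_aedge (alab v).
Proof. by case: p_apath. Qed.

Lemma ends1_atgt_gt0 (e : arrow p) : 0 < ends1 (alab (atgt e)) (asig e).
Proof.
have [_ _ _ _ /(_ (atgt e) (asig e))[+ _]] := p_apath; apply: leq_trans.
by rewrite card_gt0; apply/set0Pn; exists e; rewrite !inE !eqxx.
Qed.

Lemma ends2_asrc_gt0 (e : arrow p) : 0 < ends2 (alab (asrc e)) (asig e).
Proof.
have [_ _ _ _ /(_ (asrc e) (asig e))[_]] := p_apath; apply: leq_trans.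
by rewrite card_gt0; apply/set0Pn; exists e; rewrite !inE !eqxx.
Qed.

Lemma apath_card_arrows_within_lt (S : {set node p}) :
  S != set0 -> #|arrows_within S| < #|S|.
Proof. by case: p_apath => _ card_arrow connected _ _; apply: card_arrows_within_lt. Qed.

Section ArrowContraction.

Variable e : arrow p.

Lemma asrc_neq_atgt : asrc e != atgt e.
Proof.
apply/eqP => loop.
have : [set asrc e] != set0 by apply/set0Pn; exists (asrc e); rewrite inE.
move/apath_card_arrows_within_lt; rewrite cards1 ltnS leqn0 cards_eq0 => /eqP within0.
by have := in_set0 e; rewrite -within0 in_arrows_within -loop set11.
Qed.

Lemma arrows_within_pair : arrows_within [set asrc e; atgt e] = [set e].
Proof.
have e_in : e \in arrows_within [set asrc e; atgt e].
  by rewrite in_arrows_within !inE !eqxx orbT.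
have : [set asrc e; atgt e] != set0 by apply/set0Pn; exists (asrc e); rewrite !inE eqxx.
move/apath_card_arrows_within_lt; rewrite cards2 asrc_neq_atgt ltnS => le1.
by apply/esym/eqP; rewrite eqEcard sub1set e_in cards1.
Qed.

Lemma inner_arrows_pair X : inner_arrows [set asrc e; atgt e] X = (asig e == X).
Proof.
rewrite inner_arrowsE arrows_within_pair; case: eqP => [<- | neX].
  apply/eqP/cards1P; exists e; apply/setP => f; rewrite !inE.
  by case: (f =P e) => [-> | //]; rewrite eqxx.
apply/eqP; rewrite cards_eq0; apply/eqP/setP => f; rewrite !inE.
by case: (f =P e) => [-> | //]; apply/negbTE/eqP.
Qed.

Lemma big_arrow_ends (R : Type) (idx : R) (op : Monoid.com_law idx) (F : node p -> R) :
  \big[op/idx]_(v in [set asrc e; atgt e]) F v = op (F (asrc e)) (F (atgt e)).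
Proof. by rewrite big_setU1 ?inE ?asrc_neq_atgt // big_set1. Qed.

Lemma wpath_glue_Ia : move_Ia e ->
  wpath (glue [set asrc e; atgt e] false) = (wpath p - 1)%R.
Proof.
rewrite /move_Ia /interior => /andP[/negbTE src0 /negbTE tgt0]; apply: wpath_glue_sub1.
by rewrite big_arrow_ends /wedge /= src0 tgt0 addrK.
Qed.

Lemma wpath_glue_II : move_II e ->
  wpath (glue [set asrc e; atgt e] true) = (wpath p - 1)%R.
Proof.
rewrite /move_II /boundary => /andP[src1 tgt1]; apply: wpath_glue_sub1.
rewrite big_arrow_ends /wedge /= src1 tgt1 /sub_ends1 /sub_ends2 !inner_arrows_pair.
rewrite !big_arrow_ends; have := ends1_atgt_gt0 e; have := ends2_asrc_gt0 e.
have [tgt_o1 _] := valid_aedge_boundary (apath_valid (atgt e)) tgt1.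
by case: (asig e) => /=; [rewrite tgt_o1 | lia | lia].
Qed.

End ArrowContraction.

Section StarContraction.

Variable v : node p.
Hypothesis v_boundary : boundary v.
Local Notation Star := (star_o v).

Lemma in_star_o_self : v \in Star.
Proof. by rewrite inE eqxx. Qed.

Lemma star_o_interior w : w \in Star -> w != v -> interior w.
Proof. by rewrite inE => /orP[-> | /andP[]]. Qed.

Lemma star_o_adj w : w \in Star -> w != v -> adj v w.
Proof. by rewrite inE => /orP[-> | /andP[]]. Qed.

Lemma sub_ends1_star_o : sub_ends1 Star Ts = s1 (alab v) - inner_arrows Star Ts.
Proof.
rewrite /sub_ends1 (big_setD1 v in_star_o_self) /= big1 ?addn0 // => w /setD1P[wv wS].
by have [] := valid_aedge_interior (apath_valid w) (star_o_interior wS wv).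
Qed.

Lemma sub_ends2_star_o : sub_ends2 Star Tu = u2 (alab v) - inner_arrows Star Tu.
Proof.
rewrite /sub_ends2 (big_setD1 v in_star_o_self) /= big1 ?addn0 // => w /setD1P[wv wS].
by have [] := valid_aedge_interior (apath_valid w) (star_o_interior wS wv).
Qed.

(* Interior nodes have no incoming stable ends, so every stable arrow inside
   the star points to its centre. *)
Lemma inner_arrows_star_o_s_le : inner_arrows Star Ts <= s1 (alab v).
Proof.
have [_ _ _ _ /(_ v Ts)[+ _]] := p_apath; apply: leq_trans.
apply: subset_leq_card; apply/subsetP => e.
rewrite in_set => /andP[/andP[_ tgtS] /eqP sig_s]; rewrite in_set sig_s eqxx andbT.
case: (atgt e =P v) => // /eqP tgt_ne_v; have := ends1_atgt_gt0 e; rewrite sig_s /=.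
by have [-> _] := valid_aedge_interior (apath_valid _) (star_o_interior tgtS tgt_ne_v).
Qed.

Lemma inner_arrows_star_o_u_le : inner_arrows Star Tu <= u2 (alab v).
Proof.
have [_ _ _ _ /(_ v Tu)[_]] := p_apath; apply: leq_trans.
apply: subset_leq_card; apply/subsetP => e.
rewrite in_set => /andP[/andP[srcS _] /eqP sig_u]; rewrite in_set sig_u eqxx andbT.
case: (asrc e =P v) => // /eqP src_ne_v; have := ends2_asrc_gt0 e; rewrite sig_u /=.
by have [_ ->] := valid_aedge_interior (apath_valid _) (star_o_interior srcS src_ne_v).
Qed.

(* Each neighbour of the centre is the far end of an arrow of the star at [v],
   and that arrow has type s or u because [v] has no o-ends. *)
Lemma card_star_o_le :
  #|Star| <= (inner_arrows Star Ts + inner_arrows Star Tu).+1.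
Proof.
have [v_o1 v_o2] := valid_aedge_boundary (apath_valid v) v_boundary.
pose other e := if asrc e == v then atgt e else asrc e.
rewrite (cardsD1 v) in_star_o_self ltnS !inner_arrowsE.
apply: leq_trans (leq_card_setU _ _); apply: leq_trans (leq_imset_card other _).
apply: subset_leq_card; apply/subsetP => w /setD1P[wv wS].
have /existsP[e e_vw] := star_o_adj wS wv.
apply/imsetP; exists e; last first.
  by rewrite /other; case/orP: e_vw => /andP[/eqP-> /eqP->]; rewrite ?eqxx ?(negbTE wv).
have e_within : e \in arrows_within Star.
  rewrite in_arrows_within.
  by case/orP: e_vw => /andP[/eqP-> /eqP->]; rewrite in_star_o_self wS.
have e_type : asig e != To.
  apply/eqP => sig_o; case/orP: e_vw => /andP[/eqP src_v /eqP tgt_v].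
  - by have := ends2_asrc_gt0 e; rewrite src_v sig_o /= v_o2.
  - by have := ends1_atgt_gt0 e; rewrite tgt_v sig_o /= v_o1.
by rewrite in_setU !setIdE !in_setI e_within !inE; case: (asig e) e_type.
Qed.

Lemma wpath_glue_star : sub_legal Star -> wpath (glue Star false) = (wpath p - 1)%R.
Proof.
case/andP; rewrite sub_ends1_star_o sub_ends2_star_o => legal_s legal_u.
apply: wpath_glue_sub1.
have star_nonempty : Star != set0 by apply/set0Pn; exists v; apply: in_star_o_self.
have := apath_card_arrows_within_lt star_nonempty.
have := inner_arrows_add_le Star (isT : Ts != Tu).
have := card_star_o_le; have := inner_arrows_star_o_s_le; have := inner_arrows_star_o_u_le.
have v_mu : mu (alab v) := v_boundary.
rewrite /wedge /= (big_setD1 v in_star_o_self) /= v_mu.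
rewrite (eq_bigr (fun _ => 1%R)); last first.
  by move=> w /setD1P[wv wS]; rewrite (negbTE (star_o_interior wS wv)).
rewrite sumr_const (cardsD1 v Star) in_star_o_self.
lia.
Qed.

End StarContraction.

End AbstractPath.

Theorem lemma3p8 (p : apath) (x : marker p) :
  is_apath p -> move_applies x ->
  wpath (qtilde x) = (wpath p - 1)%R.
Proof.
case: x => [v | e] p_apath /=.
  by case/andP => v_boundary; apply: wpath_glue_star.
by case: ifP => [Ia _ | _ II]; [exact: wpath_glue_Ia | exact: wpath_glue_II].
Qed.
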